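(* Let $K$ be a finite simplicial complex, $N\subseteq K$ closed, and $\mathcal V_1,\mathcal V_2$ multivector fields on $K$. For $k\in\{1,2\}$ let $\mathcal M_k$ be a Morse decomposition of an isolated invariant set $S_k$ isolated by $N$ under $\mathcal V_k$, with Conley-Morse graph $G_k$. Let $\mathcal M_{1,2}$ be the minimal Morse decomposition of the maximal invariant set $S_{1,2}=\mathrm{inv}_{\mathcal V_1\wedge\mathcal V_2}(N)$ under the intersection field $\mathcal V_1\wedge\mathcal V_2$, and let $G_{1,2}$ be the relevant Conley-Morse graph. If there is a directed edge from $M_{1,2}$ to $M'_{1,2}$ in $G_{1,2}$, then for each $k\in\{1,2\}$ either $\iota_k(M_{1,2})=\iota_k(M'_{1,2})$ or there exists a directed edge from $\iota_k(M_{1,2})$ to $\iota_k(M'_{1,2})$ in $G_k$.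
   Context: $\sigma\le\tau$ means $\sigma$ is a face of $\tau$; $\mathrm{cl}(A)$ is the set of faces of simplices of $A$; closed means $A=\mathrm{cl}(A)$. A multivector is a convex subset of $K$ w.r.t. $\le$; a multivector field is a partition of $K$ into multivectors; $[\sigma]_{\mathcal V}$ is the multivector containing $\sigma$. The intersection field is $\mathcal V_1\wedge\mathcal V_2=\{V_1\cap V_2: V_i\in\mathcal V_i\}$ (empty sets discarded). $F_{\mathcal V}(\sigma)=[\sigma]_{\mathcal V}\cup\mathrm{cl}(\sigma)$. A path under $\mathcal V$ is a sequence $\rho:\mathbb Z\cap[a,b]\to K$ with $\rho(i)\in F_{\mathcal V}(\rho(i-1))$; a solution is a bi-infinite such sequence. A multivector $V$ is critical if $H_k(\mathrm{cl}(V),\mathrm{cl}(V)\setminus V)\ne0$ for some $k$, regular otherwise. A solution $\rho$ is essential if whenever $[\rho(i)]_{\mathcal V}$ is regular there are $i^-<i<i^+$ with $[\rho(i^\pm)]_{\mathcal V}\neq[\rho(i)]_{\mathcal V}$. $\mathrm{inv}_{\mathcal V}(A)$ is the set of simplices of $A$ lying on essential solutions with image in $A$ (the maximal invariant set in $A$). An invariant set $S$ ($\mathrm{inv}(S)=S$) is isolated by closed $N$ if $S$ is a union of multivectors and every path in $N$ with both endpoints in $S$ lies in $S$. A Morse decomposition of $S$ is a family of mutually disjoint isolated invariant subsets (Morse sets) of $S$, indexed by a finite poset, such that every essential solution in $S$ either lies in one Morse set or has its $\alpha$-limit set in $M_q$ and $\omega$-limit set in $M_p$ with $q>p$. $S$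 is minimal if $\{S\}$ is its only Morse decomposition; a Morse decomposition is minimal if all its Morse sets are minimal. A connection under $\mathcal V$ from a Morse set $M$ to a Morse set $M'$ is a path $\rho:\mathbb Z\cap[a,b]\to N$ under $\mathcal V$ with $\rho(a)\in M$, $\rho(b)\in M'$. The Conley-Morse graph of a Morse decomposition has one vertex per Morse set (identified with the Morse set), and a directed edge $M\to M'$ iff there is a connection from $M$ to $M'$ (vertices are also annotated by Poincaré polynomials of Conley indices, irrelevant here). A Morse set $M_{1,2}\in\mathcal M_{1,2}$ is relevant if there are $M_1\in\mathcal M_1$, $M_2\in\mathcal M_2$ with $M_{1,2}\subseteq M_1$ and $M_{1,2}\subseteq M_2$; for relevant $M_{1,2}$, $\iota_k(M_{1,2})$ denotes the (unique) Morse set of $\mathcal M_k$ containing $M_{1,2}$. For relevant $M_{1,2},M'_{1,2}$, a relevant connection from $M_{1,2}$ to $M'_{1,2}$ is a connection $\rho:\mathbb Z\cap[a,b]\to N$ under $\mathcal V_1\wedge\mathcal V_2$ from $M_{1,2}$ to $M'_{1,2}$ such that for $k=1,2$, whenever $\rho(i)\in M_k\in\mathcal M_k$, then $M_k=\iota_k(M_{1,2})$ or $M_k=\iota_k(M'_{1,2})$. The relevant Conley-Morse graph $G_{1,2}$ has a vertex for each relevant Morse set of $\mathcal M_{1,2}$ and a directed edge $M_{1,2}\to M'_{1,2}$ iff there is a relevant connection from $M_{1,2}$ to $M'_{1,2}$. *)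

From HB Require Import structures.
From mathcomp Require Import all_boot all_order all_algebra.
Set Implicit Arguments. Unset Strict Implicit. Unset Printing Implicit Defensive.
Import Order.TTheory GRing.Theory Num.Theory.

Local Open Scope ring_scope.

Section MVF.
Variable F : fieldType.
Variable V : finType.     (* vertices; a simplex is a nonempty {set V} *)
Variable K : {set {set V}}.

Definition simplex := {set V}.

Definition is_complex : Prop :=
  set0 \notin K /\
  forall s t : simplex, s \in K -> t != set0 -> t \subset s -> t \in K.

Definition cl (A : {set simplex}) : {set simplex} :=
  [set t in K | [exists s in A, t \subset s]].

Definition is_closed (A : {set simplex}) : Prop := A = cl A.

Definition convex (A : {set simplex}) : Prop :=
  A \subset K /\
  forall s t r : simplex, s \in A -> r \in A -> t \in K ->
    s \subset t -> t \subset r -> t \in A.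

Definition multivector_field (mv : {set {set simplex}}) : Prop :=
  partition mv K /\ forall A, A \in mv -> convex A.

Definition mvblock (mv : {set {set simplex}}) (s : simplex) := pblock mv s.

Definition intersection_field (mv1 mv2 : {set {set simplex}}) : {set {set simplex}} :=
  [set A :&: B | A in mv1, B in mv2] :\ set0.

Definition Fmap (mv : {set {set simplex}}) (s : simplex) : {set simplex} :=
  mvblock mv s :|: cl [set s].

(* Chains are row vectors indexed by all subsets of V (via enum_rank);
   vertices are ordered by enum_rank, giving the standard orientation. *)
Definition nS := #|{: simplex}|.

Definition bd_sign (s t : simplex) : F :=
  (-1) ^+ #|[set u in s | [exists w in s :\: t, (enum_rank u < enum_rank w)%N]]|.

(* boundary of k-simplices (k+1 vertices) of the relative complex (A, B) *)
Definition bdmx (A B : {set simplex}) (k : nat) : 'M[F]_nS :=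
  \matrix_(i < nS, j < nS)
    (let s := enum_val i in let t := enum_val j in
     if [&& s \in A :\: B, t \in A :\: B, #|s| == k.+1, #|t| == k & t \subset s]
     then bd_sign s t else 0).

Definition relhom_nonzero (A B : {set simplex}) (k : nat) : Prop :=
  exists c : 'rV[F]_nS,
    (forall i, c 0 i != 0 -> enum_val i \in A :\: B /\ #|enum_val i| = k.+1) /\
    c *m bdmx A B k = 0 /\
    ~~ (c <= bdmx A B k.+1)%MS.

Definition critical (A : {set simplex}) : Prop :=
  exists k, relhom_nonzero (cl A) (cl A :\: A) k.

Definition regular (A : {set simplex}) : Prop := ~ critical A.

(* A path rho : Z /\ [a,b] -> X is represented (after shifting) by its
   first element x and the list p of the following ones. *)
Definition path_in (mv : {set {set simplex}}) (X : {set simplex})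
  (x : simplex) (p : seq simplex) : Prop :=
  path (fun a b => b \in Fmap mv a) x p /\ x \in X /\ all (fun y => y \in X) p.

Definition solution (mv : {set {set simplex}}) (rho : int -> simplex) : Prop :=
  forall i : int, rho (i + 1)%R \in Fmap mv (rho i).

Definition essential (mv : {set {set simplex}}) (rho : int -> simplex) : Prop :=
  forall i : int, regular (mvblock mv (rho i)) ->
    (exists j : int, (j < i)%R /\ mvblock mv (rho j) != mvblock mv (rho i)) /\
    (exists j : int, (i < j)%R /\ mvblock mv (rho j) != mvblock mv (rho i)).

Definition in_set_sol (rho : int -> simplex) (X : {set simplex}) : Prop :=
  forall i, rho i \in X.

Definition in_inv (mv : {set {set simplex}}) (A : {set simplex}) (s : simplex) : Prop :=
  s \in A /\ exists rho, solution mv rho /\ essential mv rho /\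
    in_set_sol rho A /\ exists i, rho i = s.

Definition invariant (mv : {set {set simplex}}) (S : {set simplex}) : Prop :=
  forall s, s \in S <-> in_inv mv S s.

Definition isolated_by (mv : {set {set simplex}}) (N S : {set simplex}) : Prop :=
  is_closed N /\
  (forall s, s \in S -> mvblock mv s \subset S) /\
  (forall x p, path_in mv N x p -> x \in S -> last x p \in S -> path_in mv S x p).

Definition isolated_invariant_by (mv : {set {set simplex}}) (N S : {set simplex}) : Prop :=
  invariant mv S /\ isolated_by mv N S.

Definition isolated_invariant (mv : {set {set simplex}}) (S : {set simplex}) : Prop :=
  exists N, isolated_invariant_by mv N S.

Definition alpha_lim (rho : int -> simplex) (s : simplex) : Prop :=
  forall n : int, exists i : int, (i <= n)%R /\ rho i = s.
Definition omega_lim (rho : int -> simplex) (s : simplex) : Prop :=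
  forall n : int, exists i : int, (n <= i)%R /\ rho i = s.

Definition morse_decomposition (mv : {set {set simplex}}) (S : {set simplex})
  (MD : {set {set simplex}}) : Prop :=
  exists (d : Order.disp_t) (P : finPOrderType d) (M : P -> {set simplex}),
    MD = [set M p | p : P] /\
    (forall p q, p != q -> [disjoint M p & M q]) /\
    (forall p, M p \subset S /\ isolated_invariant mv (M p)) /\
    (forall rho, solution mv rho -> essential mv rho -> in_set_sol rho S ->
       (exists p, in_set_sol rho (M p)) \/
       (exists p q : P, (p < q)%O /\
          (forall s, alpha_lim rho s -> s \in M q) /\
          (forall s, omega_lim rho s -> s \in M p))).

Definition minimal_set (mv : {set {set simplex}}) (S : {set simplex}) : Prop :=
  forall MD, morse_decomposition mv S MD ->
    forall M, M \in MD -> M = set0 \/ M = S.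

Definition minimal_morse_decomposition (mv : {set {set simplex}}) (S : {set simplex})
  (MD : {set {set simplex}}) : Prop :=
  morse_decomposition mv S MD /\ forall M, M \in MD -> minimal_set mv M.

Definition connection (mv : {set {set simplex}}) (N M M' : {set simplex})
  (x : simplex) (p : seq simplex) : Prop :=
  path_in mv N x p /\ x \in M /\ last x p \in M'.

Definition cmg_edge (mv : {set {set simplex}}) (N : {set simplex})
  (MD : {set {set simplex}}) (M M' : {set simplex}) : Prop :=
  M \in MD /\ M' \in MD /\ exists x p, connection mv N M M' x p.

Definition iota_rel (MDk : {set {set simplex}}) (M12 Mk : {set simplex}) : Prop :=
  Mk \in MDk /\ M12 \subset Mk.

Definition relevant (MD1 MD2 MD12 : {set {set simplex}}) (M12 : {set simplex}) : Prop :=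
  M12 \in MD12 /\ (exists M1, iota_rel MD1 M12 M1) /\ (exists M2, iota_rel MD2 M12 M2).

Definition relevant_for (MDk : {set {set simplex}}) (M12 M12' : {set simplex})
  (x : simplex) (p : seq simplex) : Prop :=
  forall y Mk, y \in x :: p -> Mk \in MDk -> y \in Mk ->
    iota_rel MDk M12 Mk \/ iota_rel MDk M12' Mk.

Definition relevant_edge (mv1 mv2 : {set {set simplex}}) (N : {set simplex})
  (MD1 MD2 MD12 : {set {set simplex}}) (M12 M12' : {set simplex}) : Prop :=
  relevant MD1 MD2 MD12 M12 /\ relevant MD1 MD2 MD12 M12' /\
  exists x p, connection (intersection_field mv1 mv2) N M12 M12' x p /\
    relevant_for MD1 M12 M12' x p /\ relevant_for MD2 M12 M12' x p.

End MVF.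

(** A path under the intersection field [V1 /\ V2] is also a path under each
    [Vk], because every multivector of [V1 /\ V2] lies inside a multivector of
    [Vk]. Hence a relevant connection from [M12] to [M12'] is already a
    connection under [Vk] from [iota_k M12] to [iota_k M12'], i.e. an edge of
    the Conley-Morse graph of [Mk] (a self-loop when the two coincide). *)
From HB Require Import structures.
From mathcomp Require Import all_boot all_order all_algebra.

Lemma pblock_meet_sub (T : finType) (P1 P2 : {set {set T}}) (x : T) :
  trivIset P1 ->
  pblock ([set A :&: B | A in P1, B in P2] :\ set0) x \subset pblock P1 x.
Proof.
move=> tiP1; rewrite {1}/pblock.
case: pickP => [C /andP[CQ xC] | _] /=; last exact: sub0set.
move: CQ; rewrite !inE => /andP[_ /imset2P[A B AP1 _ defC]].
move: xC; rewrite defC => /setIP[xA _].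
by rewrite (def_pblock tiP1 AP1 xA) subsetIl.
Qed.

Section IntersectionField.
Variables (V : finType) (K : {set {set V}}) (mv1 mv2 : {set {set {set V}}}).

Lemma intersection_fieldC :
  intersection_field mv1 mv2 = intersection_field mv2 mv1.
Proof.
rewrite /intersection_field; congr (_ :\ _); apply/setP=> C.
by apply/imset2P/imset2P=> -[A B HA HB ->]; exists B A; rewrite // setIC.
Qed.

Hypothesis tri_mv1 : trivIset mv1.

Lemma Fmap_intersection_field_sub (s : {set V}) :
  Fmap K (intersection_field mv1 mv2) s \subset Fmap K mv1 s.
Proof. exact/setSU/pblock_meet_sub. Qed.

Lemma path_in_intersection_field (X : {set {set V}}) x p :
  path_in K (intersection_field mv1 mv2) X x p -> path_in K mv1 X x p.
Proof.
case=> Hpath HX; split=> //; apply: sub_path Hpath => a b /=.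
exact/subsetP/Fmap_intersection_field_sub.
Qed.

Lemma connection_intersection_field (N M M' M1 M1' : {set {set V}}) x p :
  M \subset M1 -> M' \subset M1' ->
  connection K (intersection_field mv1 mv2) N M M' x p ->
  connection K mv1 N M1 M1' x p.
Proof.
move=> /subsetP sMM1 /subsetP sM'M1' [Hpath [xM lastM']].
by split; [exact: path_in_intersection_field | split; auto].
Qed.

Lemma cmg_edge_of_intersection_connection (N : {set {set V}})
    (MD : {set {set {set V}}}) (M12 M12' M1 M1' : {set {set V}}) x p :
  connection K (intersection_field mv1 mv2) N M12 M12' x p ->
  iota_rel MD M12 M1 -> iota_rel MD M12' M1' ->
  cmg_edge K mv1 N MD M1 M1'.
Proof.
move=> conn [MD_M1 sM12] [MD_M1' sM12']; do 2!split=> //.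
by exists x, p; exact: connection_intersection_field conn.
Qed.

End IntersectionField.

Theorem proposition24 (F : fieldType) (V : finType) (K N : {set {set V}})
  (mv1 mv2 : {set {set {set V}}}) (S1 S2 S12 : {set {set V}})
  (MD1 MD2 MD12 : {set {set {set V}}}) :
  is_complex K -> is_closed K N ->
  multivector_field K mv1 -> multivector_field K mv2 ->
  isolated_invariant_by F K mv1 N S1 -> isolated_invariant_by F K mv2 N S2 ->
  morse_decomposition F K mv1 S1 MD1 -> morse_decomposition F K mv2 S2 MD2 ->
  (forall s, s \in S12 <-> in_inv F K (intersection_field mv1 mv2) N s) ->
  minimal_morse_decomposition F K (intersection_field mv1 mv2) S12 MD12 ->
  forall M12 M12' : {set {set V}},
    relevant_edge K mv1 mv2 N MD1 MD2 MD12 M12 M12' ->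
    (forall M1 M1', iota_rel MD1 M12 M1 -> iota_rel MD1 M12' M1' ->
       M1 = M1' \/ cmg_edge K mv1 N MD1 M1 M1') /\
    (forall M2 M2', iota_rel MD2 M12 M2 -> iota_rel MD2 M12' M2' ->
       M2 = M2' \/ cmg_edge K mv2 N MD2 M2 M2').
Proof.
move=> _ _ [/and3P[_ tri_mv1 _] _] [/and3P[_ tri_mv2 _] _] _ _ _ _ _ _.
move=> M12 M12' [_ [_ [x [p [conn _]]]]].
have conn' := conn; rewrite intersection_fieldC in conn'.
split=> M M' iotaM iotaM'; right.
- exact: cmg_edge_of_intersection_connection conn iotaM iotaM'.
- exact: cmg_edge_of_intersection_connection conn' iotaM iotaM'.
Qed.
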